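(* Consider a neutral evolutionary model on $N$ sites given by a replacement rule $p$ satisfying the fixation assumption described in the context, with replacement probabilities $e_{ij}$, death rates $d_i$ and site-specific fixation probabilities $\rho_i$. Then for each $i=1,\ldots,N$, $$d_i\rho_i=\sum_{j=1}^N e_{ij}\rho_j.$$
   Context: There are $N$ sites $1,\ldots,N$, each always occupied by one individual of type M (mutant) or R (resident); a state is $\mathbf{s}\in\{\mathrm{M},\mathrm{R}\}^N$. A replacement event is a pair $(R,\alpha)$ with $R\subseteq\{1,\ldots,N\}$ and $\alpha:R\to\{1,\ldots,N\}$. A replacement rule is a probability distribution $p(R,\alpha)$ on replacement events, independent of the state. The evolutionary Markov chain: at each time-step an event $(R,\alpha)$ is drawn with probability $p(R,\alpha)$ and the new state is $s_i'=s_i$ if $i\notin R$, $s_i'=s_{\alpha(i)}$ if $i\in R$. Fixation assumption: there exist a site $i$ and a finite sequence of replacement events, each of positive probability, such that if these events occur consecutively (from any initial state) every site ends up carrying the type initially at site $i$. Define $e_{ij}=\sum_{(R,\alpha):\, j\in R,\ \alpha(j)=i}p(R,\alpha)$ and $d_i=\sum_j e_{ji}=\sum_{(R,\alpha):\, i\in R}p(R,\alpha)$. The site-specific fixation probability $\rho_i$ is the probability that the chain started from the state with M at site $i$ and R elsewhere is eventually absorbed in $(\mathrm{M},\ldots,\mathrm{M})$. *)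

From HB Require Import structures.
From mathcomp Require Import all_boot all_order all_algebra.
From mathcomp Require Import all_classical all_reals all_analysis.
Set Implicit Arguments. Unset Strict Implicit. Unset Printing Implicit Defensive.
Import Order.TTheory GRing.Theory Num.Theory numFieldNormedType.Exports.
Local Open Scope ring_scope.

(* Sites are 'I_N.  A state assigns a type to every site: true = M (mutant),
   false = R (resident). *)
Definition state (N : nat) := {ffun 'I_N -> bool}.

(* A replacement event (R, alpha).  alpha is stored as a total map on sites;
   only its restriction to R is ever used. *)
Definition event (N : nat) := ({set 'I_N} * {ffun 'I_N -> 'I_N})%type.

Definition step (N : nat) (e : event N) (s : state N) : state N :=
  [ffun i => if i \in e.1 then s (e.2 i) else s i].

Definition run (N : nat) (es : seq (event N)) (s : state N) : state N :=
  foldl (fun s e => step e s) s es.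

Definition is_rule (R : realType) (N : nat) (p : event N -> R) : Prop :=
  (forall e, 0 <= p e) /\ \sum_(e : event N) p e = 1.

Definition fixation_assumption (R : realType) (N : nat) (p : event N -> R) : Prop :=
  exists (i : 'I_N) (es : seq (event N)),
    (forall e, e \in es -> 0 < p e) /\
    (forall s : state N, run es s = [ffun _ => s i]).

Definition erep (R : realType) (N : nat) (p : event N -> R) (i j : 'I_N) : R :=
  \sum_(e : event N | (j \in e.1) && (e.2 j == i)) p e.

Definition drate (R : realType) (N : nat) (p : event N -> R) (i : 'I_N) : R :=
  \sum_(e : event N | i \in e.1) p e.

Definition trans (R : realType) (N : nat) (p : event N -> R) (s s' : state N) : R :=
  \sum_(e : event N | step e s == s') p e.

Fixpoint distn (R : realType) (N : nat) (p : event N -> R) (s0 : state N) (n : nat)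
  : state N -> R :=
  match n with
  | 0 => fun s => if s == s0 then 1 else 0
  | n'.+1 => fun s' => \sum_(s : state N) distn p s0 n' s * trans p s s'
  end.

Definition allM (N : nat) : state N := [ffun _ => true].
Definition single_mutant (N : nat) (i : 'I_N) : state N := [ffun j => j == i].

(* Since (M,...,M) is absorbing,
   the event "absorbed by time n" is increasing in n with union "eventually
   absorbed", so its probability is the limit of P(X_n = (M,...,M)). *)
Definition rho (R : realType) (N : nat) (p : event N -> R) (i : 'I_N) : R :=
  limn (fun n => distn p (single_mutant i) n (allM N)).

From HB Require Import structures.
From mathcomp Require Import all_boot all_order all_algebra.
From mathcomp Require Import all_classical all_reals all_analysis.
From mathcomp Require Import lra.
Import Order.TTheory GRing.Theory Num.Theory numFieldNormedType.Exports.
Local Open Scope ring_scope.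
Local Open Scope classical_set_scope.

(** Run the chain backwards in time.  After the events [e_1, ..., e_n] the type at
    site [k] is the initial type at site [b k], where [b] is the composite of the
    maps [k |-> if k \in R then alpha k else k] of [e_1], ..., [e_n]; so the
    evolutionary chain is the image of a chain of ancestral maps under [b |-> s o b].
    From a single mutant at [j], fixation by time [n] means [b] is constantly [j];
    from an arbitrary state [s], fixation differs from "[b] is constantly some [j]
    with [s j]" only while [b] is not constant.  The fixation assumption makes the
    probability that [b] is not yet constant decay geometrically, so fixation from
    [s] has asymptotic probability [\sum_(j | s j) rho j].  Conditioning on the
    first event, after which the mutants are the [k \in R] with [alpha k = i] and
    [i] itself if [i \notin R], then gives
    [rho i = (1 - d i) rho i + \sum_k e i k rho k]. *)

Lemma cvg0_nonincreasing_contraction {R : realType} {u : R ^nat} (L : nat) (k : R) :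
  nonincreasing_seq u -> (forall n, 0 <= u n) -> k < 1 ->
  (forall n, u (n + L) <= k * u n) -> u @ \oo --> 0.
Proof.
move=> u_noninc u_ge0 k_lt1 u_contr.
have u_cvg : cvgn u.
  by apply: nonincreasing_is_cvgn => //; exists 0 => _ [n _ <-].
have l_ge0 : 0 <= limn u.
  by apply: (ler_cvg_to (cvg_cst 0) u_cvg); exact: nearW.
have l_le : limn u <= k * limn u.
  have shifted : (fun n => u (n + L)) @ \oo --> limn u by rewrite cvg_shiftn.
  have scaled : (fun n => k * u n) @ \oo --> k * limn u by exact: cvgMl_tmp.
  by apply: (ler_cvg_to shifted scaled); exact: nearW.
suff l0 : limn u = 0 by rewrite -l0; exact: u_cvg.
apply/eqP; rewrite eq_le l_ge0 andbT; nra.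
Qed.

Lemma eq_cvg_of_close {R : realType} {u v w : R ^nat} {a b : R} :
  u @ \oo --> a -> v @ \oo --> b -> w @ \oo --> 0 ->
  (forall n, `|u n - v n| <= w n) -> a = b.
Proof.
move=> ua vb w0 uvw; apply/eqP; rewrite -subr_eq0; apply/eqP.
have uv_ab : (u - v) @ \oo --> a - b by exact: cvgB.
have uv_0 : (u - v) @ \oo --> 0.
  apply: (@squeeze_cvgr _ _ _ _ (- w) w) => //; last by rewrite -oppr0; exact: cvgN.
  by apply: nearW => n; rewrite -ler_norml uvw.
exact: (cvg_unique _ uv_ab uv_0).
Qed.

Section TransitionOperator.
Context {R : realType} {N : nat} (p : event N -> R) {T : finType} (act : event N -> T -> T).

Definition runact (es : seq (event N)) (x : T) : T := foldl (fun x e => act e x) x es.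

Definition transop (H : T -> R) : T -> R := fun x => \sum_e p e * H (act e x).

Definition expectn (n : nat) : (T -> R) -> T -> R := iter n transop.

Lemma expectnS n H x : expectn n.+1 H x = \sum_e p e * expectn n H (act e x).
Proof. by []. Qed.

Lemma expectn_add m n H x : expectn (m + n) H x = expectn m (expectn n H) x.
Proof. by rewrite /expectn iterD. Qed.

Lemma expectnD n H1 H2 x :
  expectn n (fun y => H1 y + H2 y) x = expectn n H1 x + expectn n H2 x.
Proof.
elim: n x => [|n IH] x //; rewrite !expectnS -big_split.
by apply: eq_bigr => e _; rewrite IH mulrDr.
Qed.

Lemma expectnZ n a H x : expectn n (fun y => a * H y) x = a * expectn n H x.
Proof.
elim: n x => [|n IH] x //; rewrite !expectnS mulr_sumr.
by apply: eq_bigr => e _; rewrite IH mulrCA.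
Qed.

Lemma expectn_sum (I : Type) (r : seq I) (P : pred I) (F : I -> T -> R) n x :
  expectn n (fun y => \sum_(i <- r | P i) F i y) x
  = \sum_(i <- r | P i) expectn n (F i) x.
Proof.
elim: n x => [|n IH] x //; rewrite expectnS.
under eq_bigr do rewrite IH mulr_sumr.
by rewrite exchange_big.
Qed.

Hypothesis hp : is_rule p.

Lemma expectn_cst n c x : expectn n (fun=> c) x = c.
Proof.
elim: n x => [|n IH] x //; rewrite expectnS.
under eq_bigr do rewrite IH.
by rewrite -mulr_suml hp.2 mul1r.
Qed.

Lemma expectn_le n H1 H2 x :
  (forall y, H1 y <= H2 y) -> expectn n H1 x <= expectn n H2 x.
Proof.
move=> H12; elim: n x => [|n IH] x //; rewrite !expectnS.
by apply: ler_sum => e _; rewrite ler_wpM2l ?hp.1.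
Qed.

Lemma expectn_ge0 n H x : (forall y, 0 <= H y) -> 0 <= expectn n H x.
Proof. by move=> H_ge0; rewrite -(expectn_cst n 0 x) expectn_le. Qed.

Lemma expectn_le1 n H x : (forall y, H y <= 1) -> expectn n H x <= 1.
Proof. by move=> H_le1; rewrite -(expectn_cst n 1 x) expectn_le. Qed.

Lemma expectn_ge_path es H x : (forall y, 0 <= H y) ->
  \prod_(e <- es) p e * H (runact es x) <= expectn (size es) H x.
Proof.
move=> H_ge0; elim: es x => [|e es IH] x; first by rewrite big_nil mul1r.
rewrite big_cons -mulrA expectnS /=.
apply: le_trans (ler_wpM2l (hp.1 e) (IH (act e x))) _.
rewrite (bigD1 e) //= lerDl; apply: sumr_ge0 => f _.
by rewrite mulr_ge0 ?hp.1 ?expectn_ge0.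
Qed.

Lemma expectn_absorbing n H z : (forall e, act e z = z) -> expectn n H z = H z.
Proof.
move=> z_abs; elim: n => [|n IH] //; rewrite expectnS.
under eq_bigr do rewrite z_abs IH.
by rewrite -mulr_suml hp.2 mul1r.
Qed.

Lemma expectn_hit_nondecreasing z x : (forall e, act e z = z) ->
  nondecreasing_seq (fun n => expectn n (fun y => (y == z)%:R) x).
Proof.
move=> z_abs m n le_mn; rewrite /= -(subnKC le_mn) expectn_add.
apply: expectn_le => y; case: (eqVneq y z) => [->|_].
  by rewrite expectn_absorbing // eqxx.
by rewrite mulr0n; apply: expectn_ge0 => y'; rewrite ler0n.
Qed.

End TransitionOperator.

Section Equivariance.
Context {R : realType} {N : nat} (p : event N -> R) {T U : finType}.
Context {act : event N -> T -> T} {act' : event N -> U -> U} {f : T -> U}.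
Hypothesis f_equiv : forall e x, f (act e x) = act' e (f x).

Lemma runact_equiv es x : f (runact act es x) = runact act' es (f x).
Proof. by elim: es x => [|e es IH] x //=; rewrite IH f_equiv. Qed.

Lemma expectn_equiv n H x :
  expectn p act' n H (f x) = expectn p act n (fun y => H (f y)) x.
Proof.
elim: n x => [|n IH] x //; rewrite !expectnS.
by apply: eq_bigr => e _; rewrite -f_equiv IH.
Qed.

End Equivariance.

Lemma distnE (R : realType) (N : nat) (p : event N -> R) s0 n t :
  distn p s0 n t = expectn p (@step N) n (fun s => (s == t)%:R) s0.
Proof.
suff distn_expect H : \sum_s distn p s0 n s * H s = expectn p (@step N) n H s0.
  rewrite -distn_expect (bigD1 t) //= eqxx mulr1 big1 ?addr0 // => s /negbTE ->.
  by rewrite mulr0.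
elim: n H => [|n IH] H.
  by rewrite /= (bigD1 s0) //= eqxx mul1r big1 ?addr0 // => s /negbTE ->; rewrite mul0r.
rewrite [RHS]/expectn iterSr -/(expectn p (@step N) n _ s0) -IH /=.
under eq_bigr do rewrite big_distrl /=.
rewrite exchange_big /=; apply: eq_bigr => s _.
rewrite /transop big_distrr /= (partition_big (fun e => step e s) xpredT) //=.
apply: eq_bigr => t' _; rewrite -mulrA /trans !big_distrl big_distrr /=.
by apply: eq_bigr => e /eqP ->.
Qed.

Section AncestralMaps.
Context {N : nat}.
Implicit Types (e : event N) (a b : {ffun 'I_N -> 'I_N}) (s : state N).

Definition precomp {X : Type} (f : {ffun 'I_N -> X}) b : {ffun 'I_N -> X} :=
  [ffun k => f (b k)].

Definition idmap : {ffun 'I_N -> 'I_N} := [ffun k => k].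

Definition event_map e : {ffun 'I_N -> 'I_N} :=
  [ffun k => if k \in e.1 then e.2 k else k].

Definition evolve {X : Type} e (f : {ffun 'I_N -> X}) := precomp f (event_map e).

Definition constant_map b := [exists k, b == [ffun=> k]].

Lemma precompA (X : Type) (f : {ffun 'I_N -> X}) a b :
  precomp f (precomp a b) = precomp (precomp f a) b.
Proof. by apply/ffunP => k; rewrite !ffunE. Qed.

Lemma precomp_idmap (X : Type) (f : {ffun 'I_N -> X}) : precomp f idmap = f.
Proof. by apply/ffunP => k; rewrite !ffunE. Qed.

Lemma stepE e s : step e s = evolve e s.
Proof. by apply/ffunP => k; rewrite !ffunE; case: ifP. Qed.

Lemma step_precomp e s b : step e (precomp s b) = precomp s (evolve e b).
Proof. by rewrite stepE /evolve precompA. Qed.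

Lemma run_precomp es s : run es s = precomp s (runact evolve es idmap).
Proof.
have equiv e b : precomp s (evolve e b) = step e (precomp s b) by rewrite step_precomp.
by rewrite (runact_equiv equiv) precomp_idmap.
Qed.

Lemma constant_precompl a b : constant_map a -> constant_map (precomp a b).
Proof.
by case/existsP => k /eqP ->; apply/existsP; exists k; apply/eqP/ffunP => x; rewrite !ffunE.
Qed.

Lemma constant_precompr a b : constant_map b -> constant_map (precomp a b).
Proof.
case/existsP => k /eqP ->; apply/existsP; exists (a k).
by apply/eqP/ffunP => x; rewrite !ffunE.
Qed.

Lemma precomp_allM s b : (precomp s b == allM N) = [forall k, s (b k)].
Proof.
apply/eqP/forallP => [sb_allM k|s_b]; last by apply/ffunP => k; rewrite !ffunE s_b.
by have /ffunP/(_ k) := sb_allM; rewrite !ffunE.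
Qed.

Lemma precomp_single_allM j b :
  (precomp (single_mutant j) b == allM N) = (b == [ffun=> j]).
Proof.
rewrite precomp_allM; apply/forallP/eqP => [b_j|-> k]; last by rewrite !ffunE.
by apply/ffunP => k; have := b_j k; rewrite !ffunE => /eqP.
Qed.

Lemma step_allM e : step e (allM N) = allM N.
Proof. by apply/ffunP => k; rewrite !ffunE; case: ifP. Qed.

Lemma allM_precomp_bounds (R : numDomainType) s b :
  let singles : R := \sum_(j | s j) (b == [ffun=> j])%:R in
  singles <= (precomp s b == allM N)%:R <= singles + (~~ constant_map b)%:R.
Proof.
case: (boolP (constant_map b)) => [/existsP[k /eqP ->]|b_nc] /=.
  have const_eq j : ([ffun=> k] == [ffun=> j] :> {ffun 'I_N -> 'I_N}) = (k == j).
    by apply/eqP/eqP => [/ffunP/(_ k)|->]; rewrite ?ffunE.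
  have -> : (precomp s [ffun=> k] == allM N) = s k.
    by rewrite precomp_allM; apply/forallP/idP => [/(_ k)|s_k x]; rewrite ffunE.
  under eq_bigr do rewrite const_eq.
  case s_k: (s k).
    rewrite (bigD1 k) //= eqxx big1 ?addr0 ?lexx // => j /andP[_].
    by rewrite eq_sym => /negbTE ->.
  rewrite big1 ?addr0 ?lexx // => j s_j.
  by case: eqP s_k => // ->; rewrite s_j.
rewrite big1 ?add0r ?ler0n ?ler_nat ?leq_b1 // => j _.
by case: eqP b_nc => // -> /existsPn/(_ j); rewrite eqxx.
Qed.

End AncestralMaps.

Section NeutralModel.
Context {R : realType} {N : nat} (p : event N -> R).

Definition ancestry n (H : {ffun 'I_N -> 'I_N} -> R) : R :=
  expectn p evolve n H idmap.

Definition noncoalescence n : R := ancestry n (fun b => (~~ constant_map b)%:R).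

Definition absorbed n (s : state N) : R :=
  expectn p (@step N) n (fun t => (t == allM N)%:R) s.

Lemma absorbedS n s : absorbed n.+1 s = \sum_e p e * absorbed n (step e s).
Proof. by []. Qed.

Lemma absorbedE n s :
  absorbed n s = ancestry n (fun b => (precomp s b == allM N)%:R).
Proof.
have equiv e b : precomp s (evolve e b) = step e (precomp s b) by rewrite step_precomp.
by rewrite /absorbed -{1}[s]precomp_idmap (expectn_equiv p equiv).
Qed.

Lemma absorbed_single n j :
  absorbed n (single_mutant j) = ancestry n (fun b => (b == [ffun=> j])%:R).
Proof.
by rewrite absorbedE; congr ancestry; apply/funext => b; rewrite precomp_single_allM.
Qed.

Lemma ancestry_add m n H :
  ancestry (m + n) H = ancestry m (fun a => ancestry n (fun b => H (precomp a b))).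
Proof.
rewrite /ancestry expectn_add; congr expectn; apply/funext => a.
have equiv e b : precomp a (evolve e b) = evolve e (precomp a b).
  by rewrite /evolve precompA.
by rewrite -{1}[a]precomp_idmap (expectn_equiv p equiv).
Qed.

Hypothesis hp : is_rule p.

Lemma ancestry_noncoalesced_le m a :
  ancestry m (fun b => (~~ constant_map (precomp a b))%:R) <= (~~ constant_map a)%:R.
Proof.
case: (boolP (constant_map a)) => [a_c|_].
  rewrite mulr0n -(expectn_cst p evolve hp m 0 idmap); apply: expectn_le => // b.
  by rewrite constant_precompl.
by apply: expectn_le1 => // b; rewrite lern1 leq_b1.
Qed.

Lemma noncoalescence_ge0 n : 0 <= noncoalescence n.
Proof. by apply: expectn_ge0 => // b; rewrite ler0n. Qed.

Lemma noncoalescence_nonincreasing : nonincreasing_seq noncoalescence.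
Proof.
move=> m n le_mn; rewrite /= /noncoalescence -(subnKC le_mn) ancestry_add.
by apply: expectn_le => // a; exact: ancestry_noncoalesced_le.
Qed.

Lemma noncoalescence_contract es n :
  constant_map (runact evolve es idmap) ->
  noncoalescence (n + size es) <= (1 - \prod_(e <- es) p e) * noncoalescence n.
Proof.
set b0 := runact evolve es idmap; set c := \prod_(e <- es) p e => b0_c.
rewrite /noncoalescence ancestry_add /ancestry -expectnZ; apply: expectn_le => // a.
case: (boolP (constant_map a)) => a_c.
  by rewrite mulr0; apply: le_trans (ancestry_noncoalesced_le _ _) _; rewrite a_c.
(* Whatever [a] is, [precomp a b0] is constant, and [b0] is reached with probability
   at least [c]. *)
have hit : c <= ancestry (size es) (fun b => (b == b0)%:R).
  have := expectn_ge_path p evolve hp es (fun b => (b == b0)%:R) idmap.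
  by rewrite eqxx mulr1; apply => b; rewrite ler0n.
have total : ancestry (size es) (fun b => (b != b0)%:R)
             + ancestry (size es) (fun b => (b == b0)%:R) = 1.
  rewrite /ancestry -expectnD -[RHS](expectn_cst p evolve hp (size es) 1 idmap).
  congr (expectn _ _ _ _ _); apply/funext => b.
  by case: (b == b0); rewrite ?mulr0n ?mulr1n ?addr0 ?add0r.
apply: (@le_trans _ _ (ancestry (size es) (fun b => (b != b0)%:R))).
  apply: expectn_le => // b; case: (eqVneq b b0) => [->|_].
    by rewrite constant_precompr.
  by rewrite lern1 leq_b1.
by rewrite mulr1; lra.
Qed.

Lemma noncoalescence_cvg0 : fixation_assumption p -> noncoalescence @ \oo --> 0.
Proof.
case=> i0 [es [es_pos es_fix]].
have b0_c : constant_map (runact evolve es idmap).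
  apply/existsP; exists i0; rewrite -precomp_single_allM -run_precomp es_fix.
  by apply/eqP/ffunP => k; rewrite !ffunE eqxx.
have c_gt0 : 0 < \prod_(e <- es) p e by rewrite big_seq; apply: prodr_gt0.
apply: (cvg0_nonincreasing_contraction (size es) (1 - \prod_(e <- es) p e)).
- exact: noncoalescence_nonincreasing.
- exact: noncoalescence_ge0.
- by rewrite gtrBl.
- by move=> n; exact: noncoalescence_contract.
Qed.

Lemma absorbed_cvg j : (fun n => absorbed n (single_mutant j)) @ \oo --> rho p j.
Proof.
have distn_absorbed : (fun n => distn p (single_mutant j) n (allM N))
    = fun n => absorbed n (single_mutant j).
  by apply/funext => n; rewrite distnE.
rewrite /rho distn_absorbed.
apply: nondecreasing_is_cvgn => [m n|].
  exact: (expectn_hit_nondecreasing p (@step N) hp (allM N) _ (@step_allM N)).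
by exists 1 => _ [n _ <-]; apply: expectn_le1 => // t; rewrite lern1 leq_b1.
Qed.

Lemma absorbed_single_approx n s :
  `|absorbed n s - \sum_(j | s j) absorbed n (single_mutant j)| <= noncoalescence n.
Proof.
under eq_bigr do rewrite absorbed_single.
rewrite absorbedE /ancestry -expectn_sum.
set singles := fun b => \sum_(j | s j) (b == [ffun=> j])%:R.
set fixed := fun b => (precomp s b == allM N)%:R.
have lower : expectn p evolve n singles idmap <= expectn p evolve n fixed idmap.
  by apply: expectn_le => // b; case/andP: (allM_precomp_bounds R s b).
have upper : expectn p evolve n fixed idmap
             <= expectn p evolve n singles idmap + noncoalescence n.
  by rewrite -expectnD; apply: expectn_le => // b; case/andP: (allM_precomp_bounds R s b).
by rewrite ler_norml; apply/andP; split; lra.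
Qed.

Lemma sum_step_single_mutant i (v : 'I_N -> R) :
  \sum_e p e * \sum_(k | step e (single_mutant i) k) v k
  = (1 - drate p i) * v i + \sum_k erep p i k * v k.
Proof.
have split_e e : \sum_(k | step e (single_mutant i) k) v k =
    \sum_(k | (k \in e.1) && (e.2 k == i)) v k + (i \notin e.1)%:R * v i.
  rewrite (bigID (fun k => k \in e.1)) /=; congr (_ + _).
    by apply: eq_bigl => k; rewrite !ffunE andbC; case: (k \in e.1).
  case: (boolP (i \in e.1)) => i_e; rewrite ?mul0r ?mul1r.
    rewrite big_pred0 // => k; rewrite !ffunE.
    case: (boolP (k \in e.1)) => k_in; rewrite /= ?andbF ?andbT //.
    by apply: contraNF k_in => /eqP ->.
  rewrite (big_pred1 i) // => k; rewrite !ffunE.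
  case: (boolP (k \in e.1)) => k_in; rewrite /= ?andbF ?andbT //.
  by apply/esym; apply: contraTF k_in => /eqP ->.
under eq_bigr do rewrite split_e mulrDr mulr_sumr big_mkcond.
rewrite big_split /= addrC; congr (_ + _).
  have total := hp.2; rewrite (bigID (fun e : event N => i \in e.1)) /= in total.
  rewrite -[in RHS]total /drate addrAC subrr add0r big_distrl [RHS]big_mkcond /=.
  apply: eq_bigr => e _.
  by case: (i \in e.1); rewrite /= ?mulr0n ?mulr1n ?mul0r ?mulr0 ?mul1r.
rewrite exchange_big; apply: eq_bigr => k _.
by rewrite /erep big_distrl [RHS]big_mkcond.
Qed.

Lemma absorbed_recurrence_error n i :
  `|absorbed n.+1 (single_mutant i) - ((1 - drate p i) * absorbed n (single_mutant i)
      + \sum_k erep p i k * absorbed n (single_mutant k))| <= noncoalescence n.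
Proof.
rewrite absorbedS -sum_step_single_mutant -sumrB.
under eq_bigr do rewrite -mulrBr.
have -> : noncoalescence n = \sum_e p e * noncoalescence n by rewrite -mulr_suml hp.2 mul1r.
apply: le_trans (ler_norm_sum _ _ _) _; apply: ler_sum => e _.
by rewrite normrM ger0_norm ?hp.1 // ler_wpM2l ?hp.1 ?absorbed_single_approx.
Qed.

End NeutralModel.

Theorem mainTheorem7 (R : realType) (N : nat) (p : event N -> R)
  (hp : is_rule p) (hfix : fixation_assumption p) (i : 'I_N) :
  drate p i * rho p i = \sum_(j < N) erep p i j * rho p j.
Proof.
have next_cvg : (fun n => absorbed p n.+1 (single_mutant i)) @ \oo --> rho p i.
  by have := absorbed_cvg p hp i; rewrite -cvg_shiftS.
have recurrence_cvg : (fun n => (1 - drate p i) * absorbed p n (single_mutant i)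
      + \sum_j erep p i j * absorbed p n (single_mutant j)) @ \oo -->
    (1 - drate p i) * rho p i + \sum_j erep p i j * rho p j.
  apply: cvgD; first exact: cvgMl_tmp (absorbed_cvg p hp i).
  apply: cvg_big => [|j _]; first exact: add_continuous.
  exact: cvgMl_tmp (absorbed_cvg p hp j).
have := eq_cvg_of_close next_cvg recurrence_cvg (noncoalescence_cvg0 p hp hfix)
  (absorbed_recurrence_error p hp ^~ i).
lra.
Qed.
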